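(* There exist $a^*\in(0,1/10]$ and $L^*\in(0,1/6)$ with the following properties. Suppose $\Gamma_0^+$ is an $L^*$-flat arc in the upper half-wedge $V_{a^*}\cap\{y>0\}$ whose left endpoint lies on the NW face and whose right endpoint lies on the line $x=2$. Then $\mathbf{W}_+(\Gamma_0^+)$ contains an $L^*$-flat arc $\Gamma_1$ in $V_{a^*}\cap\{y>0\}$ with left endpoint on the NW face and right endpoint on the NE face, and $$\max_{(x,y)\in\Gamma_1}y<\tfrac14\min_{(x,y)\in\Gamma_0^+}y.$$ Moreover, writing $\Gamma_0^+=\{(x,f(x))\}$ and letting the endpoints of $\Gamma_1$ be $\mathbf{W}_+(x_1,f(x_1))$ and $\mathbf{W}_+(x_2,f(x_2))$, the function $\phi(x)=$ first coordinate of $\mathbf{W}_+(x,f(x))$ satisfies $\phi'(x)>1$ for all $x$ between $x_1$ and $x_2$. The analogous statements hold for $\mathbf{W}_-$ acting on an $L^*$-flat arc $\Gamma_0^-$ in the upper half-wedge with left endpoint on the line $x=2$ and right endpoint on the NE face; and, by symmetry under $y\mapsto-y$, analogous statements hold in the lower half-wedge (with $\max y$, $\min y$ replaced by $\max|y|$, $\min|y|$ and NW, NE replaced by SW, SE).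
   Context: For $x>0$, $y\in\mathbb{R}$ let $r_1^2=4+x^2+4x^2y^2$, $\Delta=((x+2)^2+8x^2y^2)((x-2)^2+8x^2y^2)$ and $\omega_\pm(x,y)=\frac{x^2-4\pm\sqrt{\Delta}}{2r_1^2}$. Let $R=\{(x,y): x>0,\ 4-4y^2-x^2y^2-8x^2y^4\ge 0\}$, $R_+=R\cap((0,2]\times\mathbb{R})$, $R_-=R\cap([2,\infty)\times\mathbb{R})$, and $\mathbf{W}_\pm(x,y)=\left(\frac{1+\omega_\pm}{1-\omega_\pm}x,\ \frac{|\omega_\pm|}{1+\omega_\pm}y\right)$ on $R_\pm$. For $0<a\le1/10$, the wedge $V_a=\{(x,y): |y|\le a,\ |y|\ge|x-2|/10\}$; its NW face is $\{y=(2-x)/10,\ 0<y\le a\}$, NE face $\{y=(x-2)/10,\ 0<y\le a\}$, SW face $\{-y=(2-x)/10,\ 0<-y\le a\}$, SE face $\{-y=(x-2)/10,\ 0<-y\le a\}$. An $L$-flat arc in $V_a$ is a graph $\{(x,f(x)):x\in I\}\subset V_a$ of an $L$-Lipschitz function $f:I\to\mathbb{R}$ on a compact interval $I$. *)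

From Stdlib Require Import Reals Lra.
Open Scope R_scope.

Definition r1sq (x y : R) : R := 4 + x ^ 2 + 4 * x ^ 2 * y ^ 2.
Definition Delta (x y : R) : R :=
  ((x + 2) ^ 2 + 8 * x ^ 2 * y ^ 2) * ((x - 2) ^ 2 + 8 * x ^ 2 * y ^ 2).
Definition omega_p (x y : R) : R := (x ^ 2 - 4 + sqrt (Delta x y)) / (2 * r1sq x y).
Definition omega_m (x y : R) : R := (x ^ 2 - 4 - sqrt (Delta x y)) / (2 * r1sq x y).

Definition inRegion (x y : R) : Prop :=
  0 < x /\ 0 <= 4 - 4 * y ^ 2 - x ^ 2 * y ^ 2 - 8 * x ^ 2 * y ^ 4.
Definition inRp (x y : R) : Prop := inRegion x y /\ x <= 2.
Definition inRm (x y : R) : Prop := inRegion x y /\ 2 <= x.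

(* W_pm given by the explicit formula (total function; intended on R_pm). *)
Definition Wgen (om x y : R) : R * R :=
  ((1 + om) / (1 - om) * x, Rabs om / (1 + om) * y).
Definition Wp (x y : R) : R * R := Wgen (omega_p x y) x y.
Definition Wm (x y : R) : R * R := Wgen (omega_m x y) x y.

Definition Vwedge (a x y : R) : Prop := Rabs y <= a /\ Rabs (x - 2) / 10 <= Rabs y.
Definition upperV (a x y : R) : Prop := Vwedge a x y /\ 0 < y.
Definition lowerV (a x y : R) : Prop := Vwedge a x y /\ y < 0.
Definition NWface (a x y : R) : Prop := y = (2 - x) / 10 /\ 0 < y <= a.
Definition NEface (a x y : R) : Prop := y = (x - 2) / 10 /\ 0 < y <= a.
Definition SWface (a x y : R) : Prop := - y = (2 - x) / 10 /\ 0 < - y <= a.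
Definition SEface (a x y : R) : Prop := - y = (x - 2) / 10 /\ 0 < - y <= a.
Definition line2 (x y : R) : Prop := x = 2.

Definition flat_arc_in (L : R) (S : R -> R -> Prop) (f : R -> R) (p q : R) : Prop :=
  p <= q /\
  (forall x y, p <= x <= q -> p <= y <= q -> Rabs (f x - f y) <= L * Rabs (x - y)) /\
  (forall x, p <= x <= q -> S x (f x)).

(* The property asserted for one map W acting on arcs in the half-wedge H:
   - Gamma_0 = graph of f on [p,q], L-flat in H, left endpoint on face LF0,
     right endpoint on face RF0;
   - then W(Gamma_0) contains Gamma_1 = graph of g on [p1,q1], L-flat in H,
     left endpoint on LF1, right endpoint on RF1;
   - max over Gamma_1 of ht(y) < 1/4 min over Gamma_0 of ht(y)
     (written pointwise; max/min are attained on these compact arcs);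
   - if W(x1,f x1), W(x2,f x2) are the endpoints of Gamma_1, then
     phi(x) = fst (W(x, f x)) has derivative > 1 at every x strictly between
     x1 and x2 where phi is differentiable. *)
Definition transfer_property (L : R) (W : R -> R -> R * R) (H : R -> R -> Prop)
  (LF0 RF0 LF1 RF1 : R -> R -> Prop) (ht : R -> R) : Prop :=
  forall (f : R -> R) (p q : R),
    flat_arc_in L H f p q -> LF0 p (f p) -> RF0 q (f q) ->
    exists (g : R -> R) (p1 q1 : R),
      flat_arc_in L H g p1 q1 /\
      (forall x, p1 <= x <= q1 -> exists t, p <= t <= q /\ W t (f t) = (x, g x)) /\
      LF1 p1 (g p1) /\ RF1 q1 (g q1) /\
      (forall x t, p1 <= x <= q1 -> p <= t <= q -> ht (g x) < / 4 * ht (f t)) /\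
      (forall x1 x2, p <= x1 <= q -> p <= x2 <= q ->
         W x1 (f x1) = (p1, g p1) -> W x2 (f x2) = (q1, g q1) ->
         forall x l, Rmin x1 x2 < x < Rmax x1 x2 ->
           derivable_pt_lim (fun t => fst (W t (f t))) x l -> 1 < l).

(* Take a = 10^-6 and L = 10^-4.  Both omega_+ and omega_- are roots of
   r1^2 w^2 - (x^2 - 4) w - 4 x^2 y^2 = 0, so near the apex (2, 0) of the wedge,
   where |x - 2| <= 21 y / 2, they satisfy 3y/10 <= |omega| <= 3y/2, increase in x
   at a rate between 1/100 and 3, and are 8-Lipschitz in y.  Along a flat arc the
   first coordinate phi(t) = t (1 + omega)/(1 - omega) of the image therefore
   expands distances by at least 101/100 (which also bounds phi' from below),
   while the second coordinate |omega| y/(1 + omega) is O(y^2): far below y/4 and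
   nearly constant.  At the endpoint on a face |omega| <= y/2, so that endpoint
   is mapped outside the wedge on its own side, while the endpoint on x = 2 is
   mapped outside the wedge on the other side.  The image curve thus crosses both
   faces, and between the crossings it is the graph of psi o phi^-1, a flat arc.
   The lower half-wedge follows from omega(x, -y) = omega(x, y). *)

From Pilot Require Import Defs.
From Stdlib Require Import Reals Lra Psatz ClassicalEpsilon.
From Coquelicot Require Import Rcomplements.
Open Scope R_scope.

(** * Lipschitz and expanding functions on an interval *)

Definition lipschitz_on (K p q : R) (h : R -> R) : Prop :=
  forall s t, p <= s <= q -> p <= t <= q -> Rabs (h s - h t) <= K * Rabs (s - t).

Definition expanding_on (c p q : R) (h : R -> R) : Prop :=
  forall s t, p <= s -> s <= t -> t <= q -> c * (t - s) <= h t - h s.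

Lemma lipschitz_on_sub (K p q p' q' : R) (h : R -> R) :
  p <= p' -> q' <= q -> lipschitz_on K p q h -> lipschitz_on K p' q' h.
Proof. intros Hp Hq Hh s t Hs Ht. apply Hh; lra. Qed.

Lemma expanding_on_sub (c p q p' q' : R) (h : R -> R) :
  p <= p' -> q' <= q -> expanding_on c p q h -> expanding_on c p' q' h.
Proof. intros Hp Hq Hh s t Hs Hst Ht. apply Hh; lra. Qed.

Lemma lipschitz_on_of_ordered (K p q : R) (h : R -> R) :
  (forall s t, p <= s -> s <= t -> t <= q -> Rabs (h t - h s) <= K * (t - s)) ->
  lipschitz_on K p q h.
Proof.
  intros Hh s t Hs Ht. destruct (Rle_or_lt s t).
  - rewrite Rabs_minus_sym, (Rabs_minus_sym s), (Rabs_pos_eq (t - s)) by lra.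
    apply Hh; lra.
  - rewrite (Rabs_pos_eq (s - t)) by lra. apply Hh; lra.
Qed.

Lemma lipschitz_on_add_scal (M K b k p q : R) (phi psi : R -> R) :
  lipschitz_on M p q phi -> lipschitz_on K p q psi ->
  lipschitz_on (M + Rabs b * K) p q (fun t => phi t + b * psi t + k).
Proof.
  intros Hphi Hpsi s t Hs Ht.
  replace (phi s + b * psi s + k - (phi t + b * psi t + k))
    with ((phi s - phi t) + b * (psi s - psi t)) by ring.
  eapply Rle_trans; [apply Rabs_triang|]. rewrite Rabs_mult.
  specialize (Hphi s t Hs Ht). specialize (Hpsi s t Hs Ht).
  pose proof (Rabs_pos b). nra.
Qed.

Lemma expanding_on_dist (p q : R) (phi : R -> R) s t :
  expanding_on 1 p q phi -> p <= s <= q -> p <= t <= q ->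
  Rabs (s - t) <= Rabs (phi s - phi t).
Proof.
  intros Hexp Hs Ht. destruct (Rle_or_lt s t).
  - specialize (Hexp s t ltac:(lra) ltac:(lra) ltac:(lra)).
    rewrite Rabs_minus_sym, (Rabs_minus_sym (phi s)), !Rabs_pos_eq; lra.
  - specialize (Hexp t s ltac:(lra) ltac:(lra) ltac:(lra)).
    rewrite !Rabs_pos_eq; lra.
Qed.

Lemma lipschitz_continuity (M : R) (h : R -> R) :
  (forall s t, Rabs (h s - h t) <= M * Rabs (s - t)) -> continuity h.
Proof.
  intros Hh t0 eps Heps. exists (eps / (Rabs M + 1)).
  pose proof (Rabs_pos M).
  split; [apply Rdiv_lt_0_compat; lra|].
  intros t [_ Ht]. simpl in *. unfold R_dist in *.
  assert (Heps' : eps / (Rabs M + 1) * (Rabs M + 1) = eps) by (field; lra).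
  pose proof (Rle_abs M). pose proof (Rabs_pos (t - t0)).
  specialize (Hh t t0). nra.
Qed.

Definition clamp (p q t : R) : R := Rmax p (Rmin q t).

Lemma clamp_in (p q t : R) : p <= q -> p <= clamp p q t <= q.
Proof. intros. unfold clamp, Rmax, Rmin. repeat destruct Rle_dec; lra. Qed.

Lemma clamp_id (p q t : R) : p <= t <= q -> clamp p q t = t.
Proof. intros. unfold clamp, Rmax, Rmin. repeat destruct Rle_dec; lra. Qed.

Lemma clamp_dist (p q s t : R) : p <= q -> Rabs (clamp p q s - clamp p q t) <= Rabs (s - t).
Proof.
  intros. unfold clamp, Rmax, Rmin. repeat destruct Rle_dec;
  unfold Rabs; repeat destruct Rcase_abs; lra.
Qed.

(* Clamping extends [h] to a globally Lipschitz, hence continuous, function. *)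
Lemma lipschitz_on_ivt (M p q : R) (h : R -> R) :
  p <= q -> lipschitz_on M p q h -> h p <= 0 -> 0 <= h q ->
  exists t, p <= t <= q /\ h t = 0.
Proof.
  intros Hpq Hh Hp Hq.
  assert (Hc : continuity (fun t => h (clamp p q t))).
  { apply (lipschitz_continuity (Rabs M)). intros s t.
    pose proof (Hh _ _ (clamp_in p q s Hpq) (clamp_in p q t Hpq)).
    pose proof (clamp_dist p q s t Hpq). pose proof (Rle_abs M).
    pose proof (Rabs_pos M). pose proof (Rabs_pos (clamp p q s - clamp p q t)).
    nra. }
  destruct (IVT_cor _ p q Hc Hpq) as [t [Ht Ht0]].
  { rewrite !clamp_id by lra. nra. }
  exists t. rewrite clamp_id in Ht0 by lra. auto.
Qed.

Lemma expanding_on_inverse (M p q : R) (phi : R -> R) :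
  p <= q -> expanding_on 1 p q phi -> lipschitz_on M p q phi ->
  exists inv : R -> R,
    (forall x, phi p <= x <= phi q -> p <= inv x <= q /\ phi (inv x) = x) /\
    (forall t, p <= t <= q -> inv (phi t) = t) /\
    lipschitz_on 1 (phi p) (phi q) inv.
Proof.
  intros Hpq Hexp Hlip.
  set (inv x := epsilon (inhabits 0) (fun t => p <= t <= q /\ phi t = x)).
  assert (Hinv : forall x, phi p <= x <= phi q -> p <= inv x <= q /\ phi (inv x) = x).
  { intros x Hx. apply (epsilon_spec (inhabits 0) (fun t => p <= t <= q /\ phi t = x)).
    destruct (lipschitz_on_ivt M p q (fun t => phi t - x)) as [t [Ht Ht0]]; try lra.
    - intros s t Hs Ht. replace (phi s - x - (phi t - x)) with (phi s - phi t) by ring.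
      apply Hlip; auto.
    - exists t. split; auto. lra. }
  exists inv. split; [exact Hinv|split].
  - intros t Ht.
    assert (Hrange : phi p <= phi t <= phi q).
    { pose proof (Hexp p t ltac:(lra) ltac:(lra) ltac:(lra)).
      pose proof (Hexp t q ltac:(lra) ltac:(lra) ltac:(lra)). lra. }
    destruct (Hinv _ Hrange) as [H1 H2].
    pose proof (expanding_on_dist p q phi (inv (phi t)) t Hexp H1 Ht) as Hd.
    rewrite H2, Rminus_diag, Rabs_R0 in Hd.
    pose proof (Rabs_pos (inv (phi t) - t)).
    apply Rminus_diag_uniq, Rabs_eq_0. lra.
  - intros x y Hx Hy. rewrite Rmult_1_l.
    destruct (Hinv x Hx) as [Hx1 Hx2]. destruct (Hinv y Hy) as [Hy1 Hy2].
    rewrite <- Hx2 at 2. rewrite <- Hy2 at 2.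
    apply (expanding_on_dist p q); auto.
Qed.

Lemma derivable_pt_lim_ge_of_expanding (c p q x l : R) (phi : R -> R) :
  expanding_on c p q phi -> p < x < q -> derivable_pt_lim phi x l -> c <= l.
Proof.
  intros Hexp Hx Hd.
  destruct (Rle_or_lt c l) as [|Hlt]; auto. exfalso.
  destruct (Hd (c - l)) as [del Hdel]; [lra|].
  pose proof (cond_pos del).
  set (h := Rmin (del / 2) ((q - x) / 2)).
  assert (Hh : 0 < h <= del / 2 /\ h <= (q - x) / 2).
  { unfold h. split; [split|]; [apply Rmin_pos| apply Rmin_l | apply Rmin_r]; lra. }
  assert (Hquot : Rabs ((phi (x + h) - phi x) / h - l) < c - l).
  { apply Hdel; [lra|]. rewrite Rabs_pos_eq; lra. }
  assert (Hinc : c <= (phi (x + h) - phi x) / h).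
  { apply Rmult_le_reg_r with h; [lra|]. unfold Rdiv. rewrite Rmult_assoc, Rinv_l by lra.
    replace (c * h) with (c * ((x + h) - x)) by ring. rewrite Rmult_1_r. apply Hexp; lra. }
  pose proof (RRle_abs ((phi (x + h) - phi x) / h - l)). lra.
Qed.

(** * Curves crossing the wedge *)

Definition left_of_wedge (P : R * R) : Prop := fst P <= 2 /\ snd P <= (2 - fst P) / 10.
Definition right_of_wedge (P : R * R) : Prop := 2 <= fst P /\ snd P <= (fst P - 2) / 10.

Section WedgeCrossing.

Variables (a K M p q : R) (phi psi : R -> R).
Hypotheses (p_le_q : p <= q) (K_le : K <= / 10).
Hypotheses (phi_expanding : expanding_on 1 p q phi) (phi_lipschitz : lipschitz_on M p q phi)
  (psi_lipschitz : lipschitz_on K p q psi).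
Hypothesis psi_pos : forall t, p <= t <= q -> 0 < psi t.
Hypotheses (start_left : left_of_wedge (phi p, psi p)) (end_right : right_of_wedge (phi q, psi q)).

Lemma wedge_crossings :
  exists ta tb, p <= ta <= tb /\ tb <= q /\
    phi ta + 10 * psi ta = 2 /\ phi tb - 10 * psi tb = 2 /\
    (forall t, ta <= t <= tb -> Rabs (phi t - 2) <= 10 * psi t).
Proof.
  destruct start_left as [Hp1 Hp2], end_right as [Hq1 Hq2]; simpl in *.
  pose proof (psi_pos p ltac:(lra)). pose proof (psi_pos q ltac:(lra)).
  destruct (lipschitz_on_ivt (M + Rabs 10 * K) p q (fun t => phi t + 10 * psi t + -2))
    as [ta [Hta Hta0]]; try lra.
  { apply lipschitz_on_add_scal; auto. }
  destruct (lipschitz_on_ivt (M + Rabs (-10) * K) p q (fun t => phi t + -10 * psi t + -2))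
    as [tb [Htb Htb0]]; try lra.
  { apply lipschitz_on_add_scal; auto. }
  pose proof (psi_pos ta Hta). pose proof (psi_pos tb Htb).
  assert (Hab : ta <= tb).
  { destruct (Rle_or_lt ta tb) as [|Hba]; auto.
    pose proof (phi_expanding tb ta ltac:(lra) ltac:(lra) ltac:(lra)). lra. }
  exists ta, tb. repeat split; try lra.
  intros t Ht.
  assert (Hpsi_ta := psi_lipschitz t ta ltac:(lra) ltac:(lra)).
  assert (Hpsi_tb := psi_lipschitz t tb ltac:(lra) ltac:(lra)).
  rewrite (Rabs_pos_eq (t - ta)) in Hpsi_ta by lra.
  rewrite (Rabs_minus_sym t tb), (Rabs_pos_eq (tb - t)) in Hpsi_tb by lra.
  apply Rabs_le_between' in Hpsi_ta. apply Rabs_le_between' in Hpsi_tb.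
  pose proof (phi_expanding ta t ltac:(lra) ltac:(lra) ltac:(lra)).
  pose proof (phi_expanding t tb ltac:(lra) ltac:(lra) ltac:(lra)).
  assert (K * (t - ta) <= / 10 * (t - ta)) by (apply Rmult_le_compat_r; lra).
  assert (K * (tb - t) <= / 10 * (tb - t)) by (apply Rmult_le_compat_r; lra).
  apply Rabs_le. split; lra.
Qed.

Lemma wedge_crossing_graph (L : R) :
  0 <= K <= L -> (forall t, p <= t <= q -> psi t <= a) ->
  exists g p1 q1, flat_arc_in L (upperV a) g p1 q1 /\
    (forall x, p1 <= x <= q1 -> exists t, p <= t <= q /\ (phi t, psi t) = (x, g x)) /\
    NWface a p1 (g p1) /\ NEface a q1 (g q1).
Proof.
  intros HKL psi_le.
  destruct wedge_crossings as (ta & tb & Hab & Htb & Hta0 & Htb0 & Hwedge).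
  destruct (expanding_on_inverse M ta tb phi) as (inv & Hinv & Hinv_phi & Hinv_lip); try lra.
  { apply (expanding_on_sub 1 p q); auto; lra. }
  { apply (lipschitz_on_sub M p q); auto; lra. }
  pose proof (psi_pos ta ltac:(lra)). pose proof (psi_le ta ltac:(lra)).
  pose proof (psi_pos tb ltac:(lra)). pose proof (psi_le tb ltac:(lra)).
  exists (fun x => psi (inv x)), (phi ta), (phi tb).
  rewrite !Hinv_phi by lra.
  split; [|split; [|split]].
  - split; [lra|split].
    + intros x y Hx Hy.
      destruct (Hinv x Hx) as [Hx1 _], (Hinv y Hy) as [Hy1 _].
      pose proof (psi_lipschitz (inv x) (inv y) ltac:(lra) ltac:(lra)).
      pose proof (Hinv_lip x y Hx Hy).
      pose proof (Rabs_pos (inv x - inv y)). pose proof (Rabs_pos (x - y)). nra.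
    + intros x Hx. destruct (Hinv x Hx) as [Hx1 Hx2].
      specialize (Hwedge (inv x) Hx1). rewrite Hx2 in Hwedge.
      pose proof (psi_pos (inv x) ltac:(lra)). pose proof (psi_le (inv x) ltac:(lra)).
      unfold upperV, Vwedge. rewrite (Rabs_pos_eq (psi (inv x))) by lra.
      repeat split; lra.
  - intros x Hx. destruct (Hinv x Hx) as [Hx1 Hx2].
    exists (inv x). split; [lra|]. rewrite Hx2. reflexivity.
  - split; [lra|split]; lra.
  - split; [lra|split]; lra.
Qed.

End WedgeCrossing.

(** * The roots [omega_p] and [omega_m] *)

Definition omega_eq (x y w : R) : Prop :=
  r1sq x y * w ^ 2 - (x ^ 2 - 4) * w - 4 * x ^ 2 * y ^ 2 = 0.

Lemma omega_eq_factored (x y w : R) :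
  omega_eq x y w -> x ^ 2 * ((1 - w) * (w + 4 * y ^ 2 * (1 + w))) = 4 * w * (1 + w).
Proof. unfold omega_eq, r1sq. intro E. lra. Qed.

Lemma quadratic_root (a b c r w : R) :
  a <> 0 -> r ^ 2 = b ^ 2 + 4 * a * c -> w = (b + r) / (2 * a) -> a * w ^ 2 - b * w - c = 0.
Proof.
  intros Ha Hr ->.
  replace (a * ((b + r) / (2 * a)) ^ 2 - b * ((b + r) / (2 * a)) - c)
    with ((r ^ 2 - (b ^ 2 + 4 * a * c)) / (4 * a)) by (field; auto).
  rewrite Hr. unfold Rdiv. ring.
Qed.

Lemma r1sq_pos (x y : R) : 0 < r1sq x y.
Proof. unfold r1sq. nra. Qed.

Lemma Delta_discriminant (x y : R) :
  Defs.Delta x y = (x ^ 2 - 4) ^ 2 + 4 * r1sq x y * (4 * x ^ 2 * y ^ 2).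
Proof. unfold Defs.Delta, r1sq. ring. Qed.

Lemma sqrt_Delta_sqr (x y : R) :
  sqrt (Defs.Delta x y) ^ 2 = (x ^ 2 - 4) ^ 2 + 4 * r1sq x y * (4 * x ^ 2 * y ^ 2).
Proof.
  rewrite <- Rsqr_pow2, Rsqr_sqrt, Delta_discriminant; [reflexivity|].
  rewrite Delta_discriminant. pose proof (r1sq_pos x y).
  apply Rplus_le_le_0_compat; [apply pow2_ge_0|].
  apply Rmult_le_pos; [lra|]. pose proof (pow2_ge_0 (x * y)). nra.
Qed.

Lemma omega_p_eq (x y : R) : omega_eq x y (omega_p x y).
Proof.
  pose proof (r1sq_pos x y).
  apply (quadratic_root _ _ _ (sqrt (Defs.Delta x y))); [lra| |reflexivity].
  rewrite sqrt_Delta_sqr. ring.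
Qed.

Lemma omega_m_eq (x y : R) : omega_eq x y (omega_m x y).
Proof.
  pose proof (r1sq_pos x y).
  apply (quadratic_root _ _ _ (- sqrt (Defs.Delta x y))); [lra| |reflexivity].
  replace ((- sqrt (Defs.Delta x y)) ^ 2) with (sqrt (Defs.Delta x y) ^ 2) by ring.
  rewrite sqrt_Delta_sqr. ring.
Qed.

Lemma lt_of_sqr_lt (u s : R) : 0 <= s -> u ^ 2 < s ^ 2 -> u < s.
Proof. intros Hs Hu. destruct (Rlt_or_le u s); nra. Qed.

Lemma omega_p_pos (x y : R) : x <> 0 -> y <> 0 -> 0 < omega_p x y.
Proof.
  intros Hx Hy. pose proof (r1sq_pos x y). pose proof (sqrt_Delta_sqr x y) as Hs.
  pose proof (sqrt_pos (Defs.Delta x y)).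
  assert (0 < x ^ 2) by (rewrite <- Rsqr_pow2; apply Rsqr_pos_lt; auto).
  assert (0 < y ^ 2) by (rewrite <- Rsqr_pow2; apply Rsqr_pos_lt; auto).
  assert (0 < x ^ 2 * y ^ 2) by (apply Rmult_lt_0_compat; assumption).
  assert (0 < r1sq x y * (4 * x ^ 2 * y ^ 2)) by (apply Rmult_lt_0_compat; lra).
  assert (- (x ^ 2 - 4) < sqrt (Defs.Delta x y)) by (apply lt_of_sqr_lt; [assumption| nra]).
  unfold omega_p. apply Rdiv_lt_0_compat; lra.
Qed.

Lemma omega_m_range (x y : R) : x <> 0 -> y <> 0 -> -1 < omega_m x y < 0.
Proof.
  intros Hx Hy. pose proof (r1sq_pos x y). pose proof (sqrt_Delta_sqr x y) as Hs.
  pose proof (sqrt_pos (Defs.Delta x y)).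
  assert (0 < x ^ 2) by (rewrite <- Rsqr_pow2; apply Rsqr_pos_lt; auto).
  assert (0 < y ^ 2) by (rewrite <- Rsqr_pow2; apply Rsqr_pos_lt; auto).
  assert (0 < x ^ 2 * y ^ 2) by (apply Rmult_lt_0_compat; assumption).
  assert (0 < r1sq x y * (4 * x ^ 2 * y ^ 2)) by (apply Rmult_lt_0_compat; lra).
  assert (x ^ 2 - 4 < sqrt (Defs.Delta x y)) by (apply lt_of_sqr_lt; [assumption| nra]).
  assert (Hgap : (x ^ 2 - 4 + 2 * r1sq x y) ^ 2 - sqrt (Defs.Delta x y) ^ 2 = 8 * r1sq x y * x ^ 2)
    by (rewrite Hs; unfold r1sq; ring).
  assert (0 < x ^ 2 - 4 + 2 * r1sq x y) by (unfold r1sq in *; nra).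
  assert (sqrt (Defs.Delta x y) < x ^ 2 - 4 + 2 * r1sq x y) by (apply lt_of_sqr_lt; nra).
  unfold omega_m. split.
  - apply Rmult_lt_reg_r with (2 * r1sq x y); [lra|].
    unfold Rdiv. rewrite Rmult_assoc, Rinv_l by lra. lra.
  - apply Rmult_lt_reg_r with (2 * r1sq x y); [lra|].
    unfold Rdiv. rewrite Rmult_assoc, Rinv_l by lra. lra.
Qed.

(** * Estimates near the apex *)

Definition apex_left (x y : R) : Prop := 0 < y <= / 1000000 /\ 2 - 21 / 2 * y <= x <= 2.
Definition apex_right (x y : R) : Prop := 0 < y <= / 1000000 /\ 2 <= x <= 2 + 21 / 2 * y.

Lemma omega_eq_sub_x (x1 x2 y w1 w2 : R) : omega_eq x1 y w1 -> omega_eq x2 y w2 ->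
  (x2 ^ 2 - x1 ^ 2) * ((1 - w2) * (w2 + 4 * y ^ 2 * (1 + w2))) =
  (w2 - w1) * (4 * (1 + w1 + w2) - x1 ^ 2 * (1 - (1 + 4 * y ^ 2) * (w1 + w2))).
Proof. intros E1%omega_eq_factored E2%omega_eq_factored. lra. Qed.

Lemma omega_eq_sub_y (x y1 y2 w1 w2 : R) : omega_eq x y1 w1 -> omega_eq x y2 w2 ->
  (w2 - w1) * (x ^ 2 - 4 - (x ^ 2 + 4 + 4 * x ^ 2 * y2 ^ 2) * (w1 + w2)) =
  - 4 * x ^ 2 * (1 - w1 ^ 2) * (y2 ^ 2 - y1 ^ 2).
Proof. intros E1%omega_eq_factored E2%omega_eq_factored. lra. Qed.

Lemma omega_eq_pos_le (x y w : R) :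
  0 < x <= 2 -> 0 < y -> 0 < w -> omega_eq x y w -> w <= 3 / 2 * y.
Proof.
  intros [Hx Hx2] Hy Hw E%omega_eq_factored.
  set (H := (1 - w) * (w + 4 * y ^ 2 * (1 + w))) in *.
  assert (HH : 0 < H).
  { destruct (Rlt_or_le 0 H) as [|HH]; auto.
    assert (0 <= x ^ 2) by nra. assert (x ^ 2 * H <= 0) by nra. nra. }
  assert (x ^ 2 <= 4) by nra.
  assert (4 * w * (1 + w) <= 4 * H) by nra.
  unfold H in *.
  assert (2 * w ^ 2 <= 4 * y ^ 2) by nra.
  nra.
Qed.

Lemma omega_eq_pos_ge (x y w : R) :
  apex_left x y -> 0 < w <= 3 / 2 * y -> omega_eq x y w -> 3 / 10 * y <= w.
Proof.
  intros ([Hy Ha] & Hx2 & Hx) [Hw Hwu] E%omega_eq_factored.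
  set (H := (1 - w) * (w + 4 * y ^ 2 * (1 + w))) in *.
  assert (HH : 0 < H) by (unfold H; apply Rmult_lt_0_compat; nra).
  assert (Hz : (2 - 21 / 2 * y) ^ 2 <= x ^ 2) by nra.
  assert (Hz2 : 4 - 42 * y <= x ^ 2) by nra.
  assert (Q : (4 - 42 * y) * H <= 4 * w * (1 + w)) by nra.
  assert (HX : w + 4 * y ^ 2 - w ^ 2 - 4 * y ^ 2 * w <= H) by (unfold H; nra).
  assert (Q2 : (4 - 42 * y) * (w + 4 * y ^ 2 - w ^ 2 - 4 * y ^ 2 * w) <= 4 * w * (1 + w)) by nra.
  clear Q HX E Hz Hz2 HH H.
  destruct (Rle_or_lt (3 / 10 * y) w) as [|Hlt]; auto. exfalso.
  assert (w * w <= 9 / 100 * (y * y)) by nra.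
  assert (y * w <= 3 / 10 * (y * y)) by nra.
  assert (y * y * w <= 3 / 10 * (y * y * y)) by nra.
  assert (y * y * y <= / 1000000 * (y * y)) by nra.
  assert (0 <= y * w * w) by nra.
  assert (0 <= y * y * y * w) by nra.
  nra.
Qed.

Lemma omega_eq_pos_NW (x y w : R) :
  NWface (/ 1000000) x y -> 0 < w <= 3 / 2 * y -> omega_eq x y w -> w <= y / 2.
Proof.
  intros (Hx & Hy & Ha) [Hw Hwu] E%omega_eq_factored.
  replace x with (2 - 10 * y) in E by lra. clear Hx.
  assert (Hz : (2 - 10 * y) ^ 2 <= 4 - 39 * y) by nra.
  set (H := (1 - w) * (w + 4 * y ^ 2 * (1 + w))) in *.
  assert (HH : 0 < H) by (unfold H; apply Rmult_lt_0_compat; nra).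
  assert (Q : 4 * w * (1 + w) <= (4 - 39 * y) * H) by nra.
  assert (HX : H <= w - w ^ 2 + 4 * y ^ 2) by (unfold H; nra).
  assert (Q2 : 4 * w * (1 + w) <= (4 - 39 * y) * (w - w ^ 2 + 4 * y ^ 2)) by nra.
  clear Q HX E Hz HH H.
  destruct (Rle_or_lt w (y / 2)) as [|Hlt]; auto. exfalso.
  assert (w * w >= 1 / 4 * (y * y)) by nra.
  assert (y * w >= 1 / 2 * (y * y)) by nra.
  assert (y * w * w <= 3 / 2 * (y * y * w)) by nra.
  assert (y * y * w <= 3 / 2 * (y * y * y)) by nra.
  assert (y * y * y <= / 1000000 * (y * y)) by nra.
  assert (0 <= y * w * w) by nra.
  nra.
Qed.

Lemma omega_eq_pos_sub_x (x1 x2 y w1 w2 : R) :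
  apex_left x1 y -> apex_left x2 y ->
  3 / 10 * y <= w1 <= 3 / 2 * y -> 3 / 10 * y <= w2 <= 3 / 2 * y ->
  omega_eq x1 y w1 -> omega_eq x2 y w2 -> x1 <= x2 ->
  / 100 * (x2 - x1) <= w2 - w1 <= 3 * (x2 - x1).
Proof.
  intros ([Hy Ha] & Hx1' & Hx1) (_ & Hx2' & Hx2) [Hw1 Hw1'] [Hw2 Hw2'] E1 E2 Hle.
  pose proof (omega_eq_sub_x _ _ _ _ _ E1 E2) as I.
  set (H2 := (1 - w2) * (w2 + 4 * y ^ 2 * (1 + w2))) in *.
  set (Bk := 4 * (1 + w1 + w2) - x1 ^ 2 * (1 - (1 + 4 * y ^ 2) * (w1 + w2))) in *.
  assert (Hz1 : x1 ^ 2 <= 4) by nra.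
  assert (Hz1' : 4 - 42 * y <= x1 ^ 2) by nra.
  assert (HBe : Bk = (4 - x1 ^ 2) + (w1 + w2) * (4 + x1 ^ 2 * (1 + 4 * y ^ 2))) by (unfold Bk; ring).
  assert (HK1 : 79 / 10 <= 4 + x1 ^ 2 * (1 + 4 * y ^ 2)) by nra.
  assert (HK2 : 4 + x1 ^ 2 * (1 + 4 * y ^ 2) <= 81 / 10) by nra.
  assert (HBk1 : 12 / 5 * y <= Bk) by (rewrite HBe; nra).
  assert (HBk2 : Bk <= 663 / 10 * y) by (rewrite HBe; nra).
  assert (HH1 : 29 / 100 * y <= H2) by (unfold H2; nra).
  assert (HH2 : H2 <= 8 / 5 * y) by (unfold H2; nra).
  assert (I2 : (x2 - x1) * ((x1 + x2) * H2) = (w2 - w1) * Bk) by (rewrite <- I; ring).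
  split; apply Rmult_le_reg_r with Bk; try lra; rewrite <- I2.
  - assert (/ 100 * Bk <= (x1 + x2) * H2) by nra. nra.
  - assert ((x1 + x2) * H2 <= 3 * Bk) by nra. nra.
Qed.

Lemma omega_eq_pos_sub_y (x y1 y2 w1 w2 : R) :
  apex_left x y1 -> 0 < y2 <= / 1000000 ->
  3 / 10 * y1 <= w1 <= 3 / 2 * y1 -> 3 / 10 * y2 <= w2 <= 3 / 2 * y2 ->
  omega_eq x y1 w1 -> omega_eq x y2 w2 -> w2 - w1 <= 8 * Rabs (y2 - y1).
Proof.
  intros ([Hy1 Ha1] & Hx' & Hx) [Hy2 Ha2] [Hw1 Hw1'] [Hw2 Hw2'] E1 E2.
  pose proof (omega_eq_sub_y _ _ _ _ _ E1 E2) as I.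
  pose proof (Rabs_pos (y2 - y1)).
  destruct (Rle_or_lt (w2 - w1) 0) as [|Hpos]; [lra|].
  set (C := x ^ 2 - 4 - (x ^ 2 + 4 + 4 * x ^ 2 * y2 ^ 2) * (w1 + w2)) in *.
  assert (Hz1 : x ^ 2 <= 4) by nra.
  assert (Hz1' : 79 / 20 <= x ^ 2) by nra.
  assert (HK1 : 79 / 10 <= x ^ 2 + 4 + 4 * x ^ 2 * y2 ^ 2) by nra.
  assert (HC : C <= - (237 / 100) * (y1 + y2)) by (unfold C; nra).
  assert (HR : 4 * x ^ 2 * (1 - w1 ^ 2) * (y2 ^ 2 - y1 ^ 2) <= 16 * (y1 + y2) * Rabs (y2 - y1)).
  { assert (0 <= x ^ 2 * (1 - w1 ^ 2) <= 4) by nra.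
    pose proof (Rle_abs (y2 - y1)). pose proof (Rle_abs (- (y2 - y1))). rewrite Rabs_Ropp in *.
    set (P := x ^ 2 * (1 - w1 ^ 2)) in *.
    replace (4 * x ^ 2 * (1 - w1 ^ 2) * (y2 ^ 2 - y1 ^ 2)) with (4 * P * ((y2 - y1) * (y2 + y1)))
      by (unfold P; ring).
    assert ((y2 - y1) * (y2 + y1) <= Rabs (y2 - y1) * (y1 + y2)) by nra.
    assert (0 <= Rabs (y2 - y1) * (y1 + y2)) by nra.
    nra. }
  assert ((w2 - w1) * (237 / 100 * (y1 + y2)) <= 16 * (y1 + y2) * Rabs (y2 - y1)) by nra.
  nra.
Qed.

Lemma omega_eq_neg_le (x y w : R) :
  2 <= x -> 0 < y -> -1 < w < 0 -> omega_eq x y w -> - w <= 3 / 2 * y.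
Proof.
  intros Hx Hy [Hw1 Hw2] E%omega_eq_factored.
  set (H := (1 - w) * (w + 4 * y ^ 2 * (1 + w))) in *.
  assert (HH : H < 0).
  { destruct (Rlt_or_le H 0) as [|HH]; auto.
    assert (0 <= x ^ 2) by nra. assert (0 <= x ^ 2 * H) by nra. nra. }
  assert (4 <= x ^ 2) by nra.
  assert (4 * w * (1 + w) <= 4 * H) by nra.
  unfold H in *.
  assert (2 * w ^ 2 <= 4 * y ^ 2) by nra.
  nra.
Qed.

Lemma omega_eq_neg_ge (x y w : R) :
  apex_right x y -> -1 < w < 0 -> - w <= 3 / 2 * y -> omega_eq x y w -> 3 / 10 * y <= - w.
Proof.
  intros ([Hy Ha] & Hx & Hx2) [Hw Hw'] Hwu E%omega_eq_factored.
  set (v := - w) in *.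
  assert (Ew : w = - v) by (unfold v; ring). clearbody v. subst w.
  set (G := (1 + v) * (v - 4 * y ^ 2 * (1 - v))) in *.
  assert (E' : x ^ 2 * G = 4 * v * (1 - v)) by (unfold G; lra).
  assert (HG : 0 < G).
  { destruct (Rlt_or_le 0 G) as [|HG]; auto.
    assert (0 <= x ^ 2) by nra. assert (x ^ 2 * G <= 0) by nra. nra. }
  assert (Hz : x ^ 2 <= 4 + 421 / 10 * y) by nra.
  assert (Q : 4 * v * (1 - v) <= (4 + 421 / 10 * y) * G) by nra.
  assert (HX : G <= v + v ^ 2 - 4 * y ^ 2 + 4 * y ^ 2 * v ^ 2) by (unfold G; nra).
  assert (Q2 : 4 * v * (1 - v) <= (4 + 421 / 10 * y) * (v + v ^ 2 - 4 * y ^ 2 + 4 * y ^ 2 * v ^ 2))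
    by nra.
  clear Q HX E E' Hz HG G.
  destruct (Rle_or_lt (3 / 10 * y) v) as [|Hlt]; auto. exfalso.
  assert (v * v <= 9 / 100 * (y * y)) by nra.
  assert (y * v <= 3 / 10 * (y * y)) by nra.
  assert (y * v * v <= 9 / 100 * (y * y * y)) by nra.
  assert (y * y * v * v <= 9 / 100 * (y * y * y * y)) by nra.
  assert (y * y * y <= / 1000000 * (y * y)) by nra.
  assert (y * y * y * y <= / 1000000 * (y * y * y)) by nra.
  assert (0 <= y * y * v * v) by nra.
  nra.
Qed.

Lemma omega_eq_neg_NE (x y w : R) :
  NEface (/ 1000000) x y -> -1 < w < 0 -> - w <= 3 / 2 * y -> omega_eq x y w -> - w <= y / 2.
Proof.
  intros (Hx & Hy & Ha) [Hw Hw'] Hwu E%omega_eq_factored.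
  replace x with (2 + 10 * y) in E by lra. clear Hx.
  set (v := - w) in *.
  assert (Ew : w = - v) by (unfold v; ring). clearbody v. subst w.
  set (G := (1 + v) * (v - 4 * y ^ 2 * (1 - v))) in *.
  assert (E' : (2 + 10 * y) ^ 2 * G = 4 * v * (1 - v)) by (unfold G; lra).
  assert (HG : 0 < G).
  { destruct (Rlt_or_le 0 G) as [|HG]; auto.
    assert (0 <= (2 + 10 * y) ^ 2) by nra. assert ((2 + 10 * y) ^ 2 * G <= 0) by nra. nra. }
  assert (Hz : 4 + 40 * y <= (2 + 10 * y) ^ 2) by nra.
  assert (Q : (4 + 40 * y) * G <= 4 * v * (1 - v)) by nra.
  assert (HX : v + v ^ 2 - 4 * y ^ 2 <= G) by (unfold G; nra).
  assert (Q2 : (4 + 40 * y) * (v + v ^ 2 - 4 * y ^ 2) <= 4 * v * (1 - v)) by nra.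
  clear Q HX E E' Hz HG G.
  destruct (Rle_or_lt v (y / 2)) as [|Hlt]; auto. exfalso.
  assert (v * v >= 1 / 4 * (y * y)) by nra.
  assert (y * v >= 1 / 2 * (y * y)) by nra.
  assert (y * y * y <= / 1000000 * (y * y)) by nra.
  assert (0 <= y * v * v) by nra.
  nra.
Qed.

Lemma omega_eq_neg_sub_x (x1 x2 y w1 w2 : R) :
  apex_right x1 y -> apex_right x2 y ->
  3 / 10 * y <= - w1 <= 3 / 2 * y -> 3 / 10 * y <= - w2 <= 3 / 2 * y ->
  omega_eq x1 y w1 -> omega_eq x2 y w2 -> x1 <= x2 ->
  / 100 * (x2 - x1) <= w2 - w1 <= 3 * (x2 - x1).
Proof.
  intros ([Hy Ha] & Hx1 & Hx1') (_ & Hx2 & Hx2') [Hw1 Hw1'] [Hw2 Hw2'] E1 E2 Hle.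
  pose proof (omega_eq_sub_x _ _ _ _ _ E1 E2) as I.
  set (H2 := (1 - w2) * (w2 + 4 * y ^ 2 * (1 + w2))) in *.
  set (Bk := 4 * (1 + w1 + w2) - x1 ^ 2 * (1 - (1 + 4 * y ^ 2) * (w1 + w2))) in *.
  assert (Hz1 : 4 <= x1 ^ 2) by nra.
  assert (Hz1' : x1 ^ 2 <= 4 + 421 / 10 * y) by nra.
  assert (HBe : Bk = (4 - x1 ^ 2) + (w1 + w2) * (4 + x1 ^ 2 * (1 + 4 * y ^ 2))) by (unfold Bk; ring).
  assert (HK1 : 79 / 10 <= 4 + x1 ^ 2 * (1 + 4 * y ^ 2)) by nra.
  assert (HK2 : 4 + x1 ^ 2 * (1 + 4 * y ^ 2) <= 81 / 10) by nra.
  assert (HBk1 : 12 / 5 * y <= - Bk) by (rewrite HBe; nra).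
  assert (HBk2 : - Bk <= 667 / 10 * y) by (rewrite HBe; nra).
  assert (HH1 : 29 / 100 * y <= - H2) by (unfold H2; nra).
  assert (HH2 : - H2 <= 8 / 5 * y) by (unfold H2; nra).
  assert (I2 : (x2 - x1) * ((x1 + x2) * (- H2)) = (w2 - w1) * (- Bk)).
  { replace ((w2 - w1) * (- Bk)) with (- ((w2 - w1) * Bk)) by ring. rewrite <- I. ring. }
  split; apply Rmult_le_reg_r with (- Bk); try lra; rewrite <- I2.
  - assert (/ 100 * (- Bk) <= (x1 + x2) * (- H2)) by nra. nra.
  - assert ((x1 + x2) * (- H2) <= 3 * (- Bk)) by nra. nra.
Qed.

Lemma omega_eq_neg_sub_y (x y1 y2 w1 w2 : R) :
  apex_right x y1 -> 0 < y2 <= / 1000000 ->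
  3 / 10 * y1 <= - w1 <= 3 / 2 * y1 -> 3 / 10 * y2 <= - w2 <= 3 / 2 * y2 ->
  omega_eq x y1 w1 -> omega_eq x y2 w2 -> w2 - w1 <= 8 * Rabs (y2 - y1).
Proof.
  intros ([Hy1 Ha1] & Hx & Hx') [Hy2 Ha2] [Hw1 Hw1'] [Hw2 Hw2'] E1 E2.
  pose proof (omega_eq_sub_y _ _ _ _ _ E1 E2) as I.
  pose proof (Rabs_pos (y2 - y1)).
  destruct (Rle_or_lt (w2 - w1) 0) as [|Hpos]; [lra|].
  set (C := x ^ 2 - 4 - (x ^ 2 + 4 + 4 * x ^ 2 * y2 ^ 2) * (w1 + w2)) in *.
  assert (Hz1 : 4 <= x ^ 2) by nra.
  assert (Hz1' : x ^ 2 <= 4 + 421 / 10 * y1) by nra.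
  assert (HK1 : 79 / 10 <= x ^ 2 + 4 + 4 * x ^ 2 * y2 ^ 2) by nra.
  assert (HC : 237 / 100 * (y1 + y2) <= C) by (unfold C; nra).
  assert (HR : - 4 * x ^ 2 * (1 - w1 ^ 2) * (y2 ^ 2 - y1 ^ 2) <= 17 * (y1 + y2) * Rabs (y2 - y1)).
  { assert (0 <= x ^ 2 * (1 - w1 ^ 2) <= 17 / 4) by nra.
    pose proof (Rle_abs (y2 - y1)). pose proof (Rle_abs (- (y2 - y1))). rewrite Rabs_Ropp in *.
    set (P := x ^ 2 * (1 - w1 ^ 2)) in *.
    replace (- 4 * x ^ 2 * (1 - w1 ^ 2) * (y2 ^ 2 - y1 ^ 2))
      with (4 * P * (- (y2 - y1) * (y2 + y1))) by (unfold P; ring).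
    assert (- (y2 - y1) * (y2 + y1) <= Rabs (y2 - y1) * (y1 + y2)) by nra.
    assert (0 <= Rabs (y2 - y1) * (y1 + y2)) by nra.
    nra. }
  assert ((w2 - w1) * (237 / 100 * (y1 + y2)) <= 17 * (y1 + y2) * Rabs (y2 - y1)) by nra.
  nra.
Qed.

Lemma omega_p_apex (x y : R) : apex_left x y -> 3 / 10 * y <= omega_p x y <= 3 / 2 * y.
Proof.
  intros Hxy. pose proof Hxy as ([Hy Hya] & Hx & Hx2).
  pose proof (omega_p_pos x y ltac:(lra) ltac:(lra)). pose proof (omega_p_eq x y).
  assert (omega_p x y <= 3 / 2 * y) by (apply (omega_eq_pos_le x); auto; split; lra).
  split; auto. apply (omega_eq_pos_ge x); auto.
Qed.

Lemma omega_m_apex (x y : R) : apex_right x y -> 3 / 10 * y <= - omega_m x y <= 3 / 2 * y.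
Proof.
  intros Hxy. pose proof Hxy as ([Hy Hya] & Hx & _).
  pose proof (omega_m_range x y ltac:(lra) ltac:(lra)). pose proof (omega_m_eq x y).
  assert (- omega_m x y <= 3 / 2 * y) by (apply (omega_eq_neg_le x); auto).
  split; auto. apply (omega_eq_neg_ge x); auto.
Qed.

(** * Images of flat arcs *)

Lemma Wgen_fst_sub_bounds (w1 w2 t1 t2 y1 y2 : R) :
  Rabs w1 <= 2 / 1000000 -> Rabs w2 <= 2 / 1000000 ->
  19 / 10 <= t1 -> t1 <= t2 -> t2 <= 21 / 10 ->
  / 200 * (t2 - t1) <= w2 - w1 <= 4 * (t2 - t1) ->
  101 / 100 * (t2 - t1) <= fst (Wgen w2 t2 y2) - fst (Wgen w1 t1 y1) <= 20 * (t2 - t1).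
Proof.
  intros Hw1%Rabs_le_between Hw2%Rabs_le_between Ht1 Ht12 Ht2 [Hd1 Hd2]. simpl.
  set (u1 := (1 + w1) / (1 - w1)). set (u2 := (1 + w2) / (1 - w2)).
  assert (E1 : u1 * (1 - w1) = 1 + w1) by (unfold u1; field; lra).
  assert (E2 : u2 * (1 - w2) = 1 + w2) by (unfold u2; field; lra).
  assert (U1 : 99 / 100 <= u1 <= 101 / 100) by nra.
  assert (U2 : 99 / 100 <= u2 <= 101 / 100) by nra.
  assert (Ed : (u2 - u1) * ((1 - w1) * (1 - w2)) = 2 * (w2 - w1)) by nra.
  assert (P : 999 / 1000 <= (1 - w1) * (1 - w2) <= 1001 / 1000) by nra.
  assert (D2 : 2 * (w2 - w1) / (1001 / 1000) <= u2 - u1).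
  { apply Rmult_le_reg_r with (1001 / 1000); [lra|].
    unfold Rdiv; rewrite Rmult_assoc, Rinv_l; nra. }
  assert (D3 : u2 - u1 <= 2 * (w2 - w1) / (999 / 1000)).
  { apply Rmult_le_reg_r with (999 / 1000); [lra|].
    unfold Rdiv; rewrite Rmult_assoc, Rinv_l; nra. }
  replace (u2 * t2 - u1 * t1) with ((t2 - t1) * u2 + t1 * (u2 - u1)) by ring.
  split; nra.
Qed.

Lemma abs_div_one_plus_lipschitz (w1 w2 : R) : Rabs w1 <= / 100 -> Rabs w2 <= / 100 ->
  Rabs (Rabs w2 / (1 + w2) - Rabs w1 / (1 + w1)) <= 11 / 10 * Rabs (w2 - w1).
Proof.
  intros Hw1 Hw2.
  pose proof (proj1 (Rabs_le_between _ _) Hw1). pose proof (proj1 (Rabs_le_between _ _) Hw2).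
  set (h1 := Rabs w1 / (1 + w1)). set (h2 := Rabs w2 / (1 + w2)).
  assert (E1 : h1 * (1 + w1) = Rabs w1) by (unfold h1; field; lra).
  assert (E2 : h2 * (1 + w2) = Rabs w2) by (unfold h2; field; lra).
  assert (EN : (h2 - h1) * ((1 + w1) * (1 + w2)) = Rabs w2 * (1 + w1) - Rabs w1 * (1 + w2)) by nra.
  assert (HN : Rabs (Rabs w2 * (1 + w1) - Rabs w1 * (1 + w2)) <= 102 / 100 * Rabs (w2 - w1)).
  { destruct (Rle_or_lt 0 w1), (Rle_or_lt 0 w2).
    - rewrite (Rabs_pos_eq w1), (Rabs_pos_eq w2) by lra.
      replace (w2 * (1 + w1) - w1 * (1 + w2)) with (w2 - w1) by ring.
      pose proof (Rabs_pos (w2 - w1)). lra.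
    - rewrite (Rabs_pos_eq w1), (Rabs_left w2), (Rabs_left (w2 - w1)) by lra.
      apply Rabs_le. split; nra.
    - rewrite (Rabs_left w1), (Rabs_pos_eq w2), (Rabs_pos_eq (w2 - w1)) by lra.
      apply Rabs_le. split; nra.
    - rewrite (Rabs_left w1), (Rabs_left w2) by lra.
      replace (- w2 * (1 + w1) - - w1 * (1 + w2)) with (- (w2 - w1)) by ring.
      rewrite Rabs_Ropp. pose proof (Rabs_pos (w2 - w1)). lra. }
  rewrite <- EN, Rabs_mult, (Rabs_pos_eq ((1 + w1) * (1 + w2))) in HN by nra.
  pose proof (Rabs_pos (h2 - h1)). pose proof (Rabs_pos (w2 - w1)).
  assert (98 / 100 <= (1 + w1) * (1 + w2)) by nra.
  nra.
Qed.

Lemma Wgen_snd_sub_bound (w1 w2 x1 x2 y1 y2 d : R) :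
  Rabs w1 <= 2 / 1000000 -> Rabs w2 <= 2 / 1000000 ->
  0 < y1 <= / 1000000 -> 0 < y2 <= / 1000000 ->
  Rabs (w2 - w1) <= 4 * d -> Rabs (y2 - y1) <= / 10000 * d ->
  Rabs (snd (Wgen w2 x2 y2) - snd (Wgen w1 x1 y1)) <= / 100000 * d.
Proof.
  intros Hw1 Hw2 Hy1 Hy2 Hdw Hdy. simpl.
  pose proof (abs_div_one_plus_lipschitz w1 w2 ltac:(lra) ltac:(lra)) as Hh.
  pose proof (proj1 (Rabs_le_between _ _) Hw1). pose proof (Rabs_pos w1).
  set (h1 := Rabs w1 / (1 + w1)) in *. set (h2 := Rabs w2 / (1 + w2)) in *.
  assert (E1 : h1 * (1 + w1) = Rabs w1) by (unfold h1; field; lra).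
  assert (B1 : 0 <= h1 <= 3 / 1000000) by (split; nra).
  clearbody h1 h2.
  replace (h2 * y2 - h1 * y1) with ((h2 - h1) * y2 + h1 * (y2 - y1)) by ring.
  eapply Rle_trans; [apply Rabs_triang|].
  rewrite !Rabs_mult, (Rabs_pos_eq y2), (Rabs_pos_eq h1) by lra.
  pose proof (Rabs_pos (h2 - h1)). pose proof (Rabs_pos (y2 - y1)).
  nra.
Qed.

Lemma Wgen_snd_bounds (w x y : R) :
  0 < Rabs w <= 2 / 1000000 -> 0 < y -> 0 < snd (Wgen w x y) <= 3 / 1000000 * y.
Proof.
  intros [Hw0 Hw] Hy. simpl.
  pose proof (proj1 (Rabs_le_between _ _) Hw).
  assert (Hh : 0 < Rabs w / (1 + w) <= 3 / 1000000).
  { split; [apply Rdiv_lt_0_compat; lra|].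
    apply Rmult_le_reg_r with (1 + w); [lra|].
    unfold Rdiv. rewrite Rmult_assoc, Rinv_l by lra. nra. }
  split; nra.
Qed.

Lemma Wgen_NW_left_of_wedge (x y w : R) :
  NWface (/ 1000000) x y -> 0 < w <= y / 2 -> left_of_wedge (Wgen w x y).
Proof.
  intros (Hx & Hy) Hw. replace x with (2 - 10 * y) by lra. unfold left_of_wedge, Wgen. simpl. rewrite Rabs_pos_eq by lra.
  set (u := (1 + w) / (1 - w)). set (h := w / (1 + w)).
  assert (E1 : u * (1 - w) = 1 + w) by (unfold u; field; lra).
  assert (E2 : h * (1 + w) = w) by (unfold h; field; lra).
  clearbody u h.
  assert (u * (2 - 10 * y) <= 2 - 79 / 10 * y) by nra.
  assert (h <= y) by nra.
  split; nra.
Qed.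

Lemma Wgen_axis_right_of_wedge (y w : R) :
  0 < y <= / 1000000 -> 0 < w <= 3 / 2 * y -> right_of_wedge (Wgen w 2 y).
Proof.
  intros Hy Hw. unfold right_of_wedge, Wgen. simpl. rewrite Rabs_pos_eq by lra.
  set (u := (1 + w) / (1 - w)). set (h := w / (1 + w)).
  assert (E1 : u * (1 - w) = 1 + w) by (unfold u; field; lra).
  assert (E2 : h * (1 + w) = w) by (unfold h; field; lra).
  clearbody u h.
  assert (1 + 2 * w <= u) by nra.
  assert (h <= w) by nra.
  split; nra.
Qed.

Lemma Wgen_axis_left_of_wedge (y w : R) :
  0 < y <= / 1000000 -> - (3 / 2 * y) <= w < 0 -> left_of_wedge (Wgen w 2 y).
Proof.
  intros Hy Hw. unfold left_of_wedge, Wgen. simpl. rewrite Rabs_left by lra.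
  set (u := (1 + w) / (1 - w)). set (h := - w / (1 + w)).
  assert (E1 : u * (1 - w) = 1 + w) by (unfold u; field; lra).
  assert (E2 : h * (1 + w) = - w) by (unfold h; field; lra).
  clearbody u h.
  assert (u <= 1 + w) by nra.
  assert (h <= -2 * w) by nra.
  split; nra.
Qed.

Lemma Wgen_NE_right_of_wedge (x y w : R) :
  NEface (/ 1000000) x y -> - (y / 2) <= w < 0 -> right_of_wedge (Wgen w x y).
Proof.
  intros (Hx & Hy) Hw. replace x with (2 + 10 * y) by lra. unfold right_of_wedge, Wgen. simpl. rewrite Rabs_left by lra.
  set (u := (1 + w) / (1 - w)). set (h := - w / (1 + w)).
  assert (E1 : u * (1 - w) = 1 + w) by (unfold u; field; lra).
  assert (E2 : h * (1 + w) = - w) by (unfold h; field; lra).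
  clearbody u h.
  assert (2 + 79 / 10 * y <= u * (2 + 10 * y)) by nra.
  assert (h <= y) by nra.
  split; nra.
Qed.

Lemma flat_arc_near_apex (f : R -> R) (p q e : R) :
  flat_arc_in (/ 10000) (upperV (/ 1000000)) f p q -> p <= e <= q -> q - p <= 10 * f e ->
  forall s t, p <= s <= q -> p <= t <= q ->
    Rabs (s - 2) <= 21 / 2 * f t /\ f s <= 101 / 100 * f t /\ 0 < f t <= / 1000000.
Proof.
  intros (Hpq & Hlip & Hin) He Hqe s t Hs Ht.
  destruct (Hin s Hs) as [[_ Hs2] Hspos], (Hin t Ht) as [[Ht1 _] Htpos].
  rewrite (Rabs_pos_eq (f s)) in Hs2 by lra. rewrite (Rabs_pos_eq (f t)) in Ht1 by lra.
  pose proof (Hlip e t He Ht) as L1%Rabs_le_between'. pose proof (Hlip s t Hs Ht) as L2%Rabs_le_between'.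
  assert (Rabs (e - t) <= q - p) by (apply Rabs_le; split; lra).
  assert (Rabs (s - t) <= q - p) by (apply Rabs_le; split; lra).
  repeat split; lra.
Qed.

Section UpperHalfWedge.

(* [Om] stands for [omega_p] on [apex_left] or [omega_m] on [apex_right]. *)
Variables (Om : R -> R -> R) (Reg : R -> R -> Prop).

Hypothesis Reg_apex : forall x y, Reg x y -> 0 < y <= / 1000000 /\ 19 / 10 <= x <= 21 / 10.
Hypothesis Om_small : forall x y, Reg x y -> 0 < Rabs (Om x y) <= 3 / 2 * y.
Hypothesis Om_sub_x : forall x1 x2 y, Reg x1 y -> Reg x2 y -> x1 <= x2 ->
  / 100 * (x2 - x1) <= Om x2 y - Om x1 y <= 3 * (x2 - x1).
Hypothesis Om_lipschitz_y : forall x y1 y2, Reg x y1 -> Reg x y2 ->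
  Rabs (Om x y1 - Om x y2) <= 8 * Rabs (y1 - y2).

Let W (x y : R) : R * R := Wgen (Om x y) x y.

Section Arc.

Variables (f : R -> R) (p q : R).
Hypothesis arc_Reg : forall s t, p <= s <= q -> p <= t <= q -> Reg s (f t).
Hypothesis arc_flat : lipschitz_on (/ 10000) p q f.

Let om (t : R) : R := Om t (f t).

Lemma arc_omega_sub_bounds (s t : R) : p <= s -> s <= t -> t <= q ->
  / 200 * (t - s) <= om t - om s <= 4 * (t - s).
Proof.
  intros Hs Hst Ht. unfold om.
  pose proof (Om_sub_x s t (f t) (arc_Reg s t ltac:(lra) ltac:(lra))
    (arc_Reg t t ltac:(lra) ltac:(lra)) Hst).
  pose proof (Om_lipschitz_y s (f t) (f s) (arc_Reg s t ltac:(lra) ltac:(lra))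
    (arc_Reg s s ltac:(lra) ltac:(lra))) as Hy%Rabs_le_between'.
  pose proof (arc_flat t s ltac:(lra) ltac:(lra)) as Hf.
  rewrite (Rabs_pos_eq (t - s)) in Hf by lra.
  pose proof (Rabs_pos (f t - f s)).
  split; nra.
Qed.

Lemma arc_point_bounds (t : R) : p <= t <= q ->
  0 < Rabs (om t) <= 2 / 1000000 /\ 0 < f t <= / 1000000 /\ 19 / 10 <= t <= 21 / 10.
Proof.
  intros Ht. pose proof (arc_Reg t t Ht Ht) as HR.
  destruct (Reg_apex _ _ HR), (Om_small _ _ HR). unfold om. repeat split; lra.
Qed.

Lemma arc_phi_expanding : expanding_on (101 / 100) p q (fun t => fst (W t (f t))).
Proof.
  intros s t Hs Hst Ht.
  destruct (arc_point_bounds s ltac:(lra)) as ([_ Hws] & _ & Hs'), (arc_point_bounds t ltac:(lra)) as ([_ Hwt] & _ & Ht').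
  apply (Wgen_fst_sub_bounds (om s) (om t)); auto; try lra.
  apply arc_omega_sub_bounds; auto.
Qed.

Lemma arc_phi_lipschitz : lipschitz_on 20 p q (fun t => fst (W t (f t))).
Proof.
  apply lipschitz_on_of_ordered. intros s t Hs Hst Ht.
  destruct (arc_point_bounds s ltac:(lra)) as ([_ Hws] & _ & Hs'), (arc_point_bounds t ltac:(lra)) as ([_ Hwt] & _ & Ht').
  destruct (Wgen_fst_sub_bounds (om s) (om t) s t (f s) (f t)); auto; try lra.
  { apply arc_omega_sub_bounds; auto. }
  unfold W, om in *. apply Rabs_le. split; lra.
Qed.

Lemma arc_psi_lipschitz : lipschitz_on (/ 100000) p q (fun t => snd (W t (f t))).
Proof.
  apply lipschitz_on_of_ordered. intros s t Hs Hst Ht.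
  destruct (arc_point_bounds s ltac:(lra)) as ([_ Hws] & Hfs & _), (arc_point_bounds t ltac:(lra)) as ([_ Hwt] & Hft & _).
  apply (Wgen_snd_sub_bound (om s) (om t)); auto.
  - pose proof (arc_omega_sub_bounds s t Hs Hst Ht). apply Rabs_le. split; lra.
  - rewrite <- (Rabs_pos_eq (t - s)) by lra. apply arc_flat; lra.
Qed.

Lemma arc_psi_bounds (t : R) : p <= t <= q ->
  0 < snd (W t (f t)) <= 3 / 1000000 * f t.
Proof.
  intros Ht. destruct (arc_point_bounds t Ht) as (Hw & Hf & _).
  apply Wgen_snd_bounds; [exact Hw | lra].
Qed.

End Arc.

Lemma transfer_property_upper (LF0 RF0 : R -> R -> Prop) :
  (forall f p q, flat_arc_in (/ 10000) (upperV (/ 1000000)) f p q -> LF0 p (f p) -> RF0 q (f q) ->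
     (forall s t, p <= s <= q -> p <= t <= q -> Reg s (f t) /\ f s <= 101 / 100 * f t) /\
     left_of_wedge (W p (f p)) /\ right_of_wedge (W q (f q))) ->
  transfer_property (/ 10000) W (upperV (/ 1000000)) LF0 RF0
    (NWface (/ 1000000)) (NEface (/ 1000000)) (fun y => y).
Proof.
  intros Hends f p q Hflat Hp Hq.
  destruct (Hends f p q Hflat Hp Hq) as (Harc & Hleft & Hright).
  pose proof Hflat as (Hpq & Hlip & Hin).
  assert (HReg : forall s t, p <= s <= q -> p <= t <= q -> Reg s (f t)) by (apply Harc).
  assert (Hexp := arc_phi_expanding f p q HReg Hlip).
  assert (Hpsi_le : forall s t, p <= s <= q -> p <= t <= q -> snd (W s (f s)) <= 3 / 1000000 * 101 / 100 * f t).
  { intros s t Hs Ht. destruct (arc_psi_bounds f p q HReg s Hs).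
    destruct (Harc s t Hs Ht). nra. }
  destruct (wedge_crossing_graph (/ 1000000) (/ 100000) 20 p q
             (fun t => fst (W t (f t))) (fun t => snd (W t (f t)))) with (L := / 10000)
    as (g & p1 & q1 & Hg & Himg & HNW & HNE); try lra; auto.
  - intros s t Hs Hst Ht. pose proof (Hexp s t Hs Hst Ht). lra.
  - apply arc_phi_lipschitz; auto.
  - apply arc_psi_lipschitz; auto.
  - intros t Ht. apply (arc_psi_bounds f p q HReg t Ht).
  - intros t Ht. pose proof (Hpsi_le t t Ht Ht). destruct (Hin t Ht) as [[Hft _] _].
    apply Rabs_le_between in Hft. lra.
  - exists g, p1, q1. split; [exact Hg|]. split; [|split; [exact HNW|split; [exact HNE|split]]].
    + intros x Hx. destruct (Himg x Hx) as (t & Ht & Hxt).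
      exists t. split; [exact Ht|]. rewrite <- Hxt. apply surjective_pairing.
    + intros x t Hx Ht. destruct (Himg x Hx) as (s & Hs & Hxs).
      apply (f_equal snd) in Hxs. cbn [snd] in Hxs. rewrite <- Hxs.
      pose proof (Hpsi_le s t Hs Ht). destruct (Hin t Ht) as [_ Hft]. lra.
    + intros x1 x2 Hx1 Hx2 _ _ x l Hx Hd.
      assert (p < x < q) by (unfold Rmin, Rmax in Hx; destruct Rle_dec; lra).
      pose proof (derivable_pt_lim_ge_of_expanding _ p q x l _ Hexp ltac:(lra) Hd). lra.
Qed.

End UpperHalfWedge.

Lemma transfer_Wp_upper :
  transfer_property (/ 10000) Wp (upperV (/ 1000000)) (NWface (/ 1000000)) line2
    (NWface (/ 1000000)) (NEface (/ 1000000)) (fun y => y).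
Proof.
  apply (transfer_property_upper omega_p apex_left).
  - intros x y ([Hy Hya] & Hx). repeat split; lra.
  - intros x y Hxy. destruct (omega_p_apex x y Hxy), Hxy as [[Hy _] _].
    rewrite Rabs_pos_eq; [split|]; lra.
  - intros x1 x2 y H1 H2 H12.
    apply (omega_eq_pos_sub_x x1 x2 y); auto using omega_p_apex, omega_p_eq.
  - intros x y1 y2 H1 H2. apply Rabs_le_between'.
    pose proof (omega_eq_pos_sub_y x y1 y2 _ _ H1 (proj1 H2) (omega_p_apex _ _ H1)
      (omega_p_apex _ _ H2) (omega_p_eq x y1) (omega_p_eq x y2)).
    pose proof (omega_eq_pos_sub_y x y2 y1 _ _ H2 (proj1 H1) (omega_p_apex _ _ H2)
      (omega_p_apex _ _ H1) (omega_p_eq x y2) (omega_p_eq x y1)).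
    rewrite (Rabs_minus_sym y2 y1) in *. split; lra.
  - intros f p q Hflat Hp Hq. unfold line2 in Hq. subst q.
    pose proof Hp as (Hfp & Hfp_pos & _).
    assert (Hnear := flat_arc_near_apex f p 2 p Hflat ltac:(destruct Hflat; lra) ltac:(lra)).
    assert (Happ : forall s t, p <= s <= 2 -> p <= t <= 2 -> apex_left s (f t)).
    { intros s t Hs Ht. destruct (Hnear s t Hs Ht) as (Hs2%Rabs_le_between' & _ & Hft).
      repeat split; lra. }
    split; [|split].
    + intros s t Hs Ht. split; [apply Happ; auto | apply Hnear; auto].
    + destruct (omega_p_apex p (f p) (Happ p p ltac:(lra) ltac:(lra))).
      apply Wgen_NW_left_of_wedge; auto.
      split; [lra|]. apply (omega_eq_pos_NW p); auto using omega_p_eq. lra.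
    + destruct (Hnear 2 2 ltac:(lra) ltac:(lra)) as (_ & _ & Hf2).
      apply Wgen_axis_right_of_wedge; auto.
      destruct (omega_p_apex 2 (f 2) (Happ 2 2 ltac:(lra) ltac:(lra))). lra.
Qed.

Lemma transfer_Wm_upper :
  transfer_property (/ 10000) Wm (upperV (/ 1000000)) line2 (NEface (/ 1000000))
    (NWface (/ 1000000)) (NEface (/ 1000000)) (fun y => y).
Proof.
  apply (transfer_property_upper omega_m apex_right).
  - intros x y ([Hy Hya] & Hx). repeat split; lra.
  - intros x y Hxy. destruct (omega_m_apex x y Hxy), Hxy as [[Hy _] _].
    rewrite Rabs_left; [split|]; lra.
  - intros x1 x2 y H1 H2 H12.
    apply (omega_eq_neg_sub_x x1 x2 y); auto using omega_m_apex, omega_m_eq.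
  - intros x y1 y2 H1 H2. apply Rabs_le_between'.
    pose proof (omega_eq_neg_sub_y x y1 y2 _ _ H1 (proj1 H2) (omega_m_apex _ _ H1)
      (omega_m_apex _ _ H2) (omega_m_eq x y1) (omega_m_eq x y2)).
    pose proof (omega_eq_neg_sub_y x y2 y1 _ _ H2 (proj1 H1) (omega_m_apex _ _ H2)
      (omega_m_apex _ _ H1) (omega_m_eq x y2) (omega_m_eq x y1)).
    rewrite (Rabs_minus_sym y2 y1) in *. split; lra.
  - intros f p q Hflat Hp Hq. unfold line2 in Hp. subst p.
    pose proof Hq as (Hfq & Hfq_pos & _).
    assert (Hnear := flat_arc_near_apex f 2 q q Hflat ltac:(destruct Hflat; lra) ltac:(lra)).
    assert (Happ : forall s t, 2 <= s <= q -> 2 <= t <= q -> apex_right s (f t)).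
    { intros s t Hs Ht. destruct (Hnear s t Hs Ht) as (Hs2%Rabs_le_between' & _ & Hft).
      repeat split; lra. }
    split; [|split].
    + intros s t Hs Ht. split; [apply Happ; auto | apply Hnear; auto].
    + destruct (Hnear 2 2 ltac:(lra) ltac:(lra)) as (_ & _ & Hf2).
      apply Wgen_axis_left_of_wedge; auto.
      destruct (omega_m_apex 2 (f 2) (Happ 2 2 ltac:(lra) ltac:(lra))). lra.
    + destruct (omega_m_apex q (f q) (Happ q q ltac:(lra) ltac:(lra))).
      pose proof (omega_m_range q (f q) ltac:(lra) ltac:(lra)).
      apply Wgen_NE_right_of_wedge; auto.
      split; [|lra]. enough (- omega_m q (f q) <= f q / 2) by lra.
      apply (omega_eq_neg_NE q); auto using omega_m_eq.
Qed.

(** * The lower half-wedge *)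

Lemma Wgen_opp (w x y : R) : Wgen w x (- y) = (fst (Wgen w x y), - snd (Wgen w x y)).
Proof. unfold Wgen. simpl. f_equal. ring. Qed.

Lemma omega_p_opp (x y : R) : omega_p x (- y) = omega_p x y.
Proof. unfold omega_p, Defs.Delta, r1sq. replace ((- y) ^ 2) with (y ^ 2) by ring. reflexivity. Qed.

Lemma omega_m_opp (x y : R) : omega_m x (- y) = omega_m x y.
Proof. unfold omega_m, Defs.Delta, r1sq. replace ((- y) ^ 2) with (y ^ 2) by ring. reflexivity. Qed.

Lemma Wp_opp (x y : R) : Wp x (- y) = (fst (Wp x y), - snd (Wp x y)).
Proof. unfold Wp. rewrite omega_p_opp. apply Wgen_opp. Qed.

Lemma Wm_opp (x y : R) : Wm x (- y) = (fst (Wm x y), - snd (Wm x y)).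
Proof. unfold Wm. rewrite omega_m_opp. apply Wgen_opp. Qed.

Lemma upperV_opp (a x y : R) : upperV a x y -> lowerV a x (- y).
Proof. intros ([Ha Hx] & Hy). unfold lowerV, Vwedge. rewrite Rabs_Ropp. repeat split; lra. Qed.

Lemma lowerV_opp (a x y : R) : lowerV a x y -> upperV a x (- y).
Proof. intros ([Ha Hx] & Hy). unfold upperV, Vwedge. rewrite Rabs_Ropp. repeat split; lra. Qed.

Lemma NWface_opp (a x y : R) : NWface a x y -> SWface a x (- y).
Proof. unfold SWface. rewrite Ropp_involutive. auto. Qed.

Lemma NEface_opp (a x y : R) : NEface a x y -> SEface a x (- y).
Proof. unfold SEface. rewrite Ropp_involutive. auto. Qed.

Lemma flat_arc_in_opp (L : R) (S S' : R -> R -> Prop) (f : R -> R) (p q : R) :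
  (forall x y, S x y -> S' x (- y)) ->
  flat_arc_in L S f p q -> flat_arc_in L S' (fun x => - f x) p q.
Proof.
  intros HS (Hpq & Hlip & Hin). split; [exact Hpq|split].
  - intros s t Hs Ht. replace (- f s - - f t) with (- (f s - f t)) by ring.
    rewrite Rabs_Ropp. auto.
  - intros x Hx. apply HS, Hin, Hx.
Qed.

Lemma pair_opp_inj (P : R * R) (u v : R) : (fst P, - snd P) = (u, - v) -> P = (u, v).
Proof. destruct P as [P1 P2]. simpl. intros [= -> E]. f_equal. lra. Qed.

Lemma transfer_property_lower (W : R -> R -> R * R) (a L : R)
    (LF0 RF0 LF1 RF1 LF0' RF0' LF1' RF1' : R -> R -> Prop) :
  (forall x y, W x (- y) = (fst (W x y), - snd (W x y))) ->
  (forall x y, LF0 x y -> LF0' x (- y)) -> (forall x y, RF0 x y -> RF0' x (- y)) ->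
  (forall x y, LF1' x y -> LF1 x (- y)) -> (forall x y, RF1' x y -> RF1 x (- y)) ->
  transfer_property L W (upperV a) LF0' RF0' LF1' RF1' (fun y => y) ->
  transfer_property L W (lowerV a) LF0 RF0 LF1 RF1 Rabs.
Proof.
  intros HW HL0 HR0 HL1 HR1 Hup f p q Hflat Hp Hq.
  assert (HWf : forall t, W t (f t) = (fst (W t (- f t)), - snd (W t (- f t)))).
  { intro t. rewrite <- (Ropp_involutive (f t)) at 1. apply HW. }
  destruct (Hup (fun x => - f x) p q) as (g & p1 & q1 & Hg & Himg & Hp1 & Hq1 & Hheight & Hderiv).
  { exact (flat_arc_in_opp _ _ _ _ _ _ (lowerV_opp a) Hflat). }
  { apply HL0, Hp. }
  { apply HR0, Hq. }
  exists (fun x => - g x), p1, q1. split; [|split; [|split; [|split; [|split]]]].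
  - exact (flat_arc_in_opp _ _ _ _ _ _ (upperV_opp a) Hg).
  - intros x Hx. destruct (Himg x Hx) as (t & Ht & E).
    exists t. split; [exact Ht|]. rewrite HWf, E. reflexivity.
  - apply HL1, Hp1.
  - apply HR1, Hq1.
  - intros x t Hx Ht. destruct Hg as (_ & _ & Hgin), Hflat as (_ & _ & Hfin).
    destruct (Hgin x Hx) as [_ Hgx], (Hfin t Ht) as [_ Hft].
    rewrite Rabs_Ropp, Rabs_pos_eq, Rabs_left by lra.
    apply Hheight; auto.
  - intros x1 x2 Hx1 Hx2 E1 E2 x l Hx Hd.
    rewrite HWf in E1, E2.
    apply (Hderiv x1 x2 Hx1 Hx2 (pair_opp_inj _ _ _ E1) (pair_opp_inj _ _ _ E2) x l Hx).
    apply (derivable_pt_lim_ext (fun t => fst (W t (f t)))); auto.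
    intro t. rewrite HWf. reflexivity.
Qed.

Theorem lemma5p3 :
  exists a L : R, 0 < a <= / 10 /\ 0 < L < / 6 /\
    transfer_property L Wp (upperV a) (NWface a) line2 (NWface a) (NEface a) (fun y => y) /\
    transfer_property L Wm (upperV a) line2 (NEface a) (NWface a) (NEface a) (fun y => y) /\
    transfer_property L Wp (lowerV a) (SWface a) line2 (SWface a) (SEface a) Rabs /\
    transfer_property L Wm (lowerV a) line2 (SEface a) (SWface a) (SEface a) Rabs.
Proof.
  exists (/ 1000000), (/ 10000).
  split; [lra|]. split; [lra|].
  split; [exact transfer_Wp_upper|]. split; [exact transfer_Wm_upper|].
  split.
  - apply (transfer_property_lower _ _ _ _ _ _ _ (NWface (/ 1000000)) line2
      (NWface (/ 1000000)) (NEface (/ 1000000)) Wp_opp); auto using NWface_opp, NEface_opp, transfer_Wp_upper.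
  - apply (transfer_property_lower _ _ _ _ _ _ _ line2 (NEface (/ 1000000))
      (NWface (/ 1000000)) (NEface (/ 1000000)) Wm_opp); auto using NWface_opp, NEface_opp, transfer_Wm_upper.
Qed.
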